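(* Assume (R). For every $n\ge0$, $$A_n(x)=(2x-1)^{\delta_n}\,F_n\big(x(x-1)\big).$$ Moreover $f_{n,0}=(-1)^n\alpha_n$ and $f_{n,d_n}=2^{-\delta_n}\alpha_0$; furthermore $$A_n(\phi)=(\sqrt5)^{\delta_n}F_n(1),\qquad \sum_{\nu=0}^{n}\binom{n}{\nu}\alpha_{n-\nu}\Phi_\nu=\begin{cases}2F_n(1),& n\text{ odd},\\ 0,& n\text{ even}.\end{cases}$$
   Context: Let $(\alpha_n)_{n\ge0}$ be an arbitrary sequence of complex numbers with Appell polynomials $A_n(x)=\sum_{\nu=0}^{n}\binom{n}{\nu}\alpha_{n-\nu}x^\nu$; property (R) means $A_n(1-x)=(-1)^nA_n(x)$ for all $n\ge0$. Let $S_n(x)=\sum_{k=0}^n s_{n,k}x^k$ with $s_{n,k}=\sum_{\nu=k}^{n}\binom{n}{\nu}\binom{\nu}{k}\alpha_\nu$. For $n\ge0$ let $d_n=\lfloor n/2\rfloor$, $\delta_n=1$ if $n$ odd and $0$ otherwise. The Faulhaber-type polynomial is $F_n(u)=\sum_{k\ge0}f_{n,k}u^k$ with $f_{n,k}=2^{2k-n}\sum_{\nu=0}^{d_n-k}\binom{n}{2\nu}\binom{d_n-\nu}{k}S_{2\nu}(1)$ for $0\le k\le d_n$ and $f_{n,k}=0$ for $k>d_n$. $\phi=(1+\sqrt5)/2$ is the golden ratio and $\Phi_\nu=(\phi^\nu-(1-\phi)^\nu)/\sqrt5$ are the Fibonacci numbers. *)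

From mathcomp Require Import all_boot all_order all_algebra.
From mathcomp Require Import complex reals.
Set Implicit Arguments. Unset Strict Implicit. Unset Printing Implicit Defensive.
Import Order.TTheory GRing.Theory Num.Theory.
Local Open Scope ring_scope.
Local Open Scope complex_scope.

Section Defs.
Variable R : realType.
Local Notation C := (R[i]).
Variable alpha : nat -> C.

Definition appA (n : nat) (x : C) : C :=
  \sum_(nu < n.+1) ('C(n, nu))%:R * alpha (n - nu)%N * x ^+ nu.

Definition propR : Prop :=
  forall (n : nat) (x : C), appA n (1 - x) = (-1) ^+ n * appA n x.

Definition s_coef (n k : nat) : C :=
  \sum_(k <= nu < n.+1) ('C(n, nu) * 'C(nu, k))%:R * alpha nu.

Definition S_poly (n : nat) (x : C) : C :=
  \sum_(k < n.+1) s_coef n k * x ^+ k.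

Definition d_ (n : nat) : nat := n./2.
Definition delta (n : nat) : nat := odd n.

Definition f_coef (n k : nat) : C :=
  if (k <= d_ n)%N then
    (2%:R : C) ^ ((2 * k)%N%:Z - n%:Z)%R *
    \sum_(nu < (d_ n - k)%N.+1)
        ('C(n, (2 * nu)%N) * 'C((d_ n - nu)%N, k))%:R * S_poly (2 * nu)%N 1
  else 0.

Definition F_poly (n : nat) (u : C) : C :=
  \sum_(k < (d_ n).+1) f_coef n k * u ^+ k.

End Defs.

Definition sqrt5 (R : realType) : R[i] := (Num.sqrt (5%:R : R))%:C.
Definition goldphi (R : realType) : R[i] := ((1 + Num.sqrt (5%:R : R)) / 2%:R)%:C.
Definition Fib (R : realType) (nu : nat) : R[i] :=
  (goldphi R ^+ nu - (1 - goldphi R) ^+ nu) / sqrt5 R.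

From mathcomp Require Import all_boot all_order all_algebra.
From mathcomp Require Import complex reals.
From mathcomp Require Import ring zify.
Import Order.TTheory GRing.Theory Num.Theory.
Local Open Scope ring_scope.

(* The Appell polynomials satisfy the addition theorem
     A_n(x) = sum_j C(n,j) A_j(h) (x - h)^(n-j)          (any centre h).
   Under the reflection property (R), A_j(1/2) = -A_j(1/2) for odd j, so only
   even j survive when h = 1/2.  Writing y = x - 1/2 and u = x(x-1) we have
   y^2 = 1/4 + u and 2x - 1 = 2y, so A_n(x) = (2y)^delta_n * G(u) with G a
   polynomial; expanding (1/4 + u)^(d_n - v) binomially and using the identity
   S_m(1) = 2^m A_m(1/2) (a Vandermonde-type resummation of the s_{m,k}) shows
   that G is exactly F_n.  The coefficient f_{n,0} is read off at x = 0, the top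
   coefficient f_{n,d_n} is a one-term sum, and the golden-ratio statements
   follow from phi (phi - 1) = 1, 2 phi - 1 = sqrt 5 and (R) at x = phi. *)

Lemma sum_pad_zero (V : zmodType) (k N : nat) (F : nat -> V) : (k <= N)%N ->
  (forall i, (k < i <= N)%N -> F i = 0) ->
  \sum_(i < k.+1) F i = \sum_(i < N.+1) F i.
Proof.
move=> kN F0; rewrite -!(big_mkord xpredT) [RHS](big_cat_nat _ (n:=k.+1)) //=.
rewrite [X in _ + X]big1_seq ?addr0 // => i /andP[_].
by rewrite mem_index_iota => /andP[] ? ?; apply: F0; apply/andP; split.
Qed.

Lemma sum_even_indices (V : zmodType) (g : nat -> V) (n : nat) :
  (forall j, odd j -> g j = 0) ->
  \sum_(j < n.+1) g j = \sum_(v < (n./2).+1) g (2 * v)%N.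
Proof.
move=> g_odd; elim: n => [|n IH]; first by rewrite !big_ord1.
rewrite big_ord_recr /= IH uphalf_half.
have := odd_double_half n; rewrite -muln2.
case Hn: (odd n) => /= E.
- by rewrite add1n [RHS]big_ord_recr /=; congr (_ + g _); lia.
- by rewrite g_odd ?addr0 //= Hn.
Qed.

Lemma bin_swap (n m l : nat) :
  ('C(n, l) * 'C(n - l, m) = 'C(n, m) * 'C(n - m, l))%N.
Proof.
have [small|fit] := ltnP n (m + l); last first.
  apply/eqP; rewrite -(@eqn_pmul2r (l`! * m`! * (n - l - m)`!)); last first.
    by rewrite !muln_gt0 !fact_gt0.
  have -> : ('C(n, l) * 'C(n - l, m) * (l`! * m`! * (n - l - m)`!) =
      'C(n, l) * (l`! * ('C(n - l, m) * (m`! * (n - l - m)`!))))%N by ring.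
  have -> : ('C(n, m) * 'C(n - m, l) * (l`! * m`! * (n - l - m)`!) =
      'C(n, m) * (m`! * ('C(n - m, l) * (l`! * (n - m - l)`!))))%N.
    by rewrite (subnAC n l m); ring.
  by rewrite !bin_fact //; lia.
have [ln|nl] := leqP l n; last first.
  by rewrite (@bin_small n l) // mul0n (@bin_small (n - m) l) ?muln0 //; lia.
rewrite (@bin_small (n - l) m) ?muln0; last by lia.
have [mn|nm] := leqP m n; last by rewrite (@bin_small n m).
by rewrite (@bin_small (n - m) l) ?muln0 //; lia.
Qed.

Section Appell.
Variables (R : realType) (alpha : nat -> R[i]).
Local Notation C := (R[i]).
Local Notation two := (2%:R : C).
Local Notation half := ((2%:R : C)^-1).

Lemma two_neq0 : two != 0.
Proof. by rewrite pnatr_eq0. Qed.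

Lemma two_powz (k n : nat) :
  two ^ ((2 * k)%N%:Z - n%:Z) = two ^+ (2 * k) / two ^+ n.
Proof. by rewrite expfzDr ?two_neq0 // -exprnN. Qed.

(* The power-of-two bookkeeping of the factorisation: for n = b + 2(v + k + K),
   2^(2k - n) 2^(2v) 2^b = (1/4)^K. *)
Lemma two_pow_balance (b v k K : nat) :
  two ^ ((2 * k)%N%:Z - (b + 2 * (v + k + K))%N%:Z) * two ^+ (2 * v) * two ^+ b
  = (two * two)^-1 ^+ K.
Proof.
rewrite two_powz exprVn exprMn.
have -> : two ^+ (b + 2 * (v + k + K)) =
    two ^+ (2 * k) * two ^+ (2 * v) * two ^+ b * (two ^+ K * two ^+ K).
  by rewrite -!exprD; congr (_ ^+ _); lia.
have t0 := two_neq0; field; by rewrite !expf_neq0.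
Qed.

Lemma appA_rev (n : nat) (x : C) :
  appA alpha n x = \sum_(m < n.+1) ('C(n, m))%:R * alpha m * x ^+ (n - m).
Proof.
rewrite /appA (reindex_inj rev_ord_inj) /=; apply: eq_bigr => i _.
have hi : (i <= n)%N by rewrite -ltnS.
by rewrite subSS bin_sub // subKn.
Qed.

(* Addition theorem of Appell sequences: re-centring at an arbitrary point h.
   Both sides equal the double sum of C(n,m) C(n-m,l) alpha_m h^(n-m-l) y^l. *)
Lemma appA_shift (n : nat) (x h : C) :
  appA alpha n x =
  \sum_(j < n.+1) ('C(n, j))%:R * appA alpha j h * (x - h) ^+ (n - j).
Proof.
set y := x - h; have Ex : x = h + y by rewrite /y addrC subrK.
pose G (m l : nat) :=
  (('C(n, m) * 'C(n - m, l))%N)%:R * alpha m * (h ^+ (n - m - l) * y ^+ l).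
transitivity (\sum_(m < n.+1) \sum_(l < n.+1) G m l).
  rewrite appA_rev; apply: eq_bigr => m _; rewrite {1}Ex exprDn.
  rewrite -(@sum_pad_zero _ (n - m) n (G m) (leq_subr m n)); last first.
    by move=> l /andP[hl _]; rewrite /G (@bin_small (n - m) l) // muln0 !mul0r.
  by rewrite mulr_sumr; apply: eq_bigr => l _; rewrite /G natrM -mulr_natr; ring.
pose H (j m : nat) :=
  (('C(n, j) * 'C(j, m))%N)%:R * alpha m * (h ^+ (j - m) * y ^+ (n - j)).
symmetry; transitivity (\sum_(j < n.+1) \sum_(m < n.+1) H j m).
  apply: eq_bigr => j _; rewrite appA_rev.
  rewrite -(@sum_pad_zero _ j n (H j)); last 2 first.
  - by rewrite -ltnS.
  - by move=> m /andP[hm _]; rewrite /H (@bin_small j m) // muln0 !mul0r.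
  rewrite mulr_sumr mulr_suml; apply: eq_bigr => m _; rewrite /H natrM; ring.
rewrite exchange_big /=; apply: eq_bigr => m _.
rewrite (reindex_inj rev_ord_inj) /=; apply: eq_bigr => l _.
have hl : (l <= n)%N by rewrite -ltnS.
by rewrite subSS /H /G subKn // bin_sub // bin_swap (subnAC n l m).
Qed.

(* S_m(1) = 2^m A_m(1/2): summing s_{m,k} over k collapses sum_k C(nu,k) = 2^nu. *)
Lemma S_poly_at1 (m : nat) : S_poly alpha m 1 = two ^+ m * appA alpha m half.
Proof.
pose T (nu k : nat) : C := (('C(m, nu) * 'C(nu, k))%N)%:R * alpha nu.
transitivity (\sum_(k < m.+1) \sum_(nu < m.+1) T nu k).
  rewrite /S_poly; apply: eq_bigr => k _; rewrite expr1n mulr1 /s_coef.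
  rewrite -(big_mkord xpredT (T ^~ k)) [RHS](big_cat_nat _ (n:=k)) //=; last first.
    exact: ltnW.
  rewrite [X in _ = X + _]big1_seq ?add0r // => nu /andP[_].
  by rewrite mem_index_iota => /andP[_ h]; rewrite /T (@bin_small nu k) // muln0 mul0r.
rewrite exchange_big appA_rev mulr_sumr; apply: eq_bigr => nu _.
have hnu : (nu <= m)%N by rewrite -ltnS.
have row_sum : \sum_(k < m.+1) ('C(nu, k))%:R = two ^+ nu :> C.
  rewrite -(@sum_pad_zero _ nu m (fun k => ('C(nu, k))%:R : C) hnu); last first.
    by move=> k /andP[hk _]; rewrite bin_small.
  by rewrite -[two]/(1 + 1 : C) exprDn; apply: eq_bigr => k _; rewrite !expr1n mul1r.
transitivity (('C(m, nu))%:R * alpha nu * \sum_(k < m.+1) ('C(nu, k))%:R).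
  by rewrite mulr_sumr; apply: eq_bigr => k _; rewrite /T natrM; ring.
have -> : two ^+ m = two ^+ nu * two ^+ (m - nu) by rewrite -exprD subnKC.
rewrite row_sum exprVn.
have t0 := two_neq0; field; exact: expf_neq0.
Qed.

(* The top coefficient of F_n is a single term: f_{n,d_n} = alpha_0 / 2^delta_n. *)
Lemma f_coef_top (n : nat) :
  f_coef alpha n (d_ n) = (two ^+ delta n)^-1 * alpha 0%N.
Proof.
rewrite /f_coef leqnn subnn big_ord1 /= muln0 bin0 subn0 binn two_powz.
rewrite /S_poly big_ord1 /= /s_coef big_nat1 /= mulr1 !mul1r.
have En : n = (delta n + 2 * d_ n)%N.
  by have := odd_double_half n; rewrite -muln2 /delta /d_; lia.
rewrite {2}En exprD; have t0 := two_neq0; field; by rewrite !expf_neq0.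
Qed.

Lemma fib_sum_appA (n : nat) :
  \sum_(nu < n.+1) ('C(n, nu))%:R * alpha (n - nu)%N * Fib R nu
  = (appA alpha n (goldphi R) - appA alpha n (1 - goldphi R)) / sqrt5 R.
Proof.
by rewrite /appA -sumrB mulr_suml; apply: eq_bigr => nu _; rewrite /Fib; ring.
Qed.

Section Reflection.
Hypothesis symR : propR alpha.

(* (R) at x = 1/2 forces A_j(1/2) = -A_j(1/2), i.e. A_j(1/2) = 0, for odd j. *)
Lemma appA_half_odd (j : nat) : odd j -> appA alpha j half = 0.
Proof.
move=> oj; have t0 := two_neq0; have := symR j half.
have -> : 1 - half = half by field.
rewrite -signr_odd oj expr1 => E.
have : appA alpha j half * two = 0 by rewrite mulr_natr mulr2n {1}E; ring.
by move/eqP; rewrite mulf_eq0 (negbTE t0) orbF => /eqP.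
Qed.

Lemma appA_even_expansion (n : nat) (x : C) :
  appA alpha n x = \sum_(v < (d_ n).+1)
    ('C(n, 2 * v))%:R * appA alpha (2 * v) half * (x - half) ^+ (n - 2 * v).
Proof.
rewrite (appA_shift _ _ half).
rewrite (@sum_even_indices _ (fun j => ('C(n, j))%:R * appA alpha j half *
                                        (x - half) ^+ (n - j))) // => j oj.
by rewrite appA_half_odd // mulr0 mul0r.
Qed.

Lemma appA_factorisation (n : nat) (x : C) :
  appA alpha n x = (two * x - 1) ^+ delta n * F_poly alpha n (x * (x - 1)).
Proof.
have t0 := two_neq0.
set y := x - half; set u := x * (x - 1); set q : C := (two * two)^-1.
set d := d_ n; set b := delta n; pose a j := appA alpha j half.
have En : n = (b + 2 * d)%N.
  by have := odd_double_half n; rewrite -muln2 /b /d /delta /d_; lia.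
have y_sq : y ^+ 2 = q + u by rewrite /y /q /u; field.
have lin : two * x - 1 = two * y by rewrite /y; field.
(* term (v, k): order 2v of the even expansion, k-th term of (q + u)^(d - v) *)
pose P (v k : nat) : C := ('C(n, 2 * v))%:R * a (2 * v)%N * y ^+ b *
  (q ^+ (d - v - k) * u ^+ k *+ 'C(d - v, k)).
pose Q (k v : nat) : C :=
  (('C(n, 2 * v) * 'C(d - v, k))%N)%:R * S_poly alpha (2 * v) 1.
have expand : appA alpha n x = \sum_(v < d.+1) \sum_(k < d.+1) P v k.
  rewrite appA_even_expansion; apply: eq_bigr => v _.
  have hv : (v <= d)%N by rewrite -ltnS.
  rewrite -(@sum_pad_zero _ (d - v) d (P v) (leq_subr v d)); last first.
    by move=> k /andP[hk _]; rewrite /P (@bin_small (d - v) k) // mulr0n mulr0.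
  have -> : (n - 2 * v = b + 2 * (d - v))%N by lia.
  by rewrite -/y exprD exprM y_sq (exprDn q u) /P -mulr_sumr /a; ring.
have F_expand : (two * x - 1) ^+ b * F_poly alpha n u = \sum_(k < d.+1)
    \sum_(v < d.+1) (two * y) ^+ b * (two ^ ((2 * k)%N%:Z - n%:Z) * Q k v * u ^+ k).
  rewrite lin /F_poly -/d mulr_sumr; apply: eq_bigr => k _.
  have hk : (k <= d)%N by rewrite -ltnS.
  rewrite /f_coef -/d hk (@sum_pad_zero _ (d - k) d (Q k) (leq_subr k d)); last first.
    by move=> v /andP[hv1 hv2]; rewrite /Q (@bin_small (d - v) k) ?muln0 ?mul0r //; lia.
  by rewrite mulr_sumr mulr_suml mulr_sumr; apply: eq_bigr => v _; ring.
(* the two double sums agree term by term; terms with k > d - v vanish *)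
rewrite expand F_expand exchange_big /=; apply: eq_bigr => k _; apply: eq_bigr => v _.
have hv : (v <= d)%N by rewrite -ltnS.
have [hkv|hkv] := leqP k (d - v); last first.
  by rewrite /P /Q (@bin_small (d - v) k) // muln0 mulr0n !(mulr0, mul0r).
have := two_pow_balance b v k (d - v - k).
have -> : (b + 2 * (v + k + (d - v - k)))%N = n by lia.
rewrite -/q => balance.
rewrite /P /Q S_poly_at1 -/(a _) -balance [(two * y) ^+ b]exprMn natrM.
rewrite -[_ *+ 'C(d - v, k)]mulr_natr.
(* a monomial identity; the powers are abstracted so that ring does not unfold them *)
by move: (two ^ _) (two ^+ (2 * v)) (two ^+ b) (y ^+ b) (u ^+ k) (a _) => ? ? ? ? ? ?; ring.
Qed.

(* Evaluating the factorisation at x = 0 gives f_{n,0} = (-1)^n alpha_n. *)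
Lemma f_coef_first (n : nat) : f_coef alpha n 0 = (-1) ^+ n * alpha n.
Proof.
have := appA_factorisation n 0.
rewrite /appA big_ord_recl /= big1 => [|i _]; last by rewrite expr0n /= mulr0.
rewrite /F_poly big_ord_recl /= big1 => [|i _]; last by rewrite mul0r expr0n /= mulr0.
rewrite !addr0 !expr0 !mulr1 bin0 subn0 mul1r mulr0 sub0r /delta signr_odd => ->.
by rewrite mulrA -expr2 sqrr_sign mul1r.
Qed.

End Reflection.
End Appell.

Lemma goldphi_u (R : realType) : goldphi R * (goldphi R - 1) = 1.
Proof.
have s2 : Num.sqrt (5%:R : R) ^+ 2 = 5%:R by rewrite sqr_sqrtr ?ler0n.
rewrite /goldphi -(rmorph1 (real_complex R)) -rmorphB -rmorphM.
congr (real_complex R _); set s := Num.sqrt (5%:R : R).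
have -> : (1 + s) / 2%:R * ((1 + s) / 2%:R - 1) = (s ^+ 2 - 1) / 4%:R by field.
by rewrite /s s2; field.
Qed.

Lemma goldphi_lin (R : realType) : 2%:R * goldphi R - 1 = sqrt5 R.
Proof.
rewrite /goldphi /sqrt5 -(rmorph_nat (real_complex R) 2) -(rmorph1 (real_complex R)).
by rewrite -rmorphM -rmorphB; congr (real_complex R _); field.
Qed.

Lemma sqrt5_neq0 (R : realType) : sqrt5 R != 0.
Proof.
rewrite /sqrt5 (inj_eq (@complexI R)) -/(_ != _).
by rewrite sqrtr_eq0 -ltNge ltr0n.
Qed.

Theorem mainTheorem13 (R : realType) (alpha : nat -> R[i]) :
  propR alpha ->
  [/\ (forall (n : nat) (x : R[i]),
         appA alpha n x = (2%:R * x - 1) ^+ delta n * F_poly alpha n (x * (x - 1))),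
      (forall n : nat, f_coef alpha n 0 = (-1) ^+ n * alpha n),
      (forall n : nat, f_coef alpha n (d_ n) = (2%:R ^+ delta n)^-1 * alpha 0%N),
      (forall n : nat, appA alpha n (goldphi R) = sqrt5 R ^+ delta n * F_poly alpha n 1)
    & (forall n : nat,
         \sum_(nu < n.+1) ('C(n, nu))%:R * alpha (n - nu)%N * Fib R nu
         = if odd n then 2%:R * F_poly alpha n 1 else 0)].
Proof.
move=> symR.
have at_phi n : appA alpha n (goldphi R) = sqrt5 R ^+ delta n * F_poly alpha n 1.
  by rewrite appA_factorisation // goldphi_u goldphi_lin.
split=> // [n x|n|n|n]; first exact: appA_factorisation.
- exact: f_coef_first.
- exact: f_coef_top.
rewrite fib_sum_appA symR at_phi /delta -signr_odd; have s0 := sqrt5_neq0 R.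
by case: (odd n) => /=; field.
Qed.
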